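(* Assume $\delta=0$, $k>2$, and that a fraction $b\in(0,1)$ of firms receive patents (no link costs). Then along any sequence of symmetric investment equilibria, $$\lim_{n\to\infty}q^*(0)\,n^{1/k}=\left(\frac{k-1}{b}\right)^{1/k}.$$
   Context: Model (for each number of firms $n\ge 2$). There are $n$ firms $1,\dots,n$; firm $i$ can discover a single idea, also labelled $i$. Fixed parameters: an integer complexity $k\ge 2$, $\delta\in[0,1]$, and a cost function $c:[0,1)\to[0,\infty)$ that is continuously differentiable, increasing and convex with $c(0)=0$ and $c(p)\to\infty$ as $p\to1^-$. A set of $bn$ firms are patented (exogenously); patent status is known. Each firm chooses an investment $p_i\in[0,1)$ and an openness in $[0,1]$; $q_i(1)$ denotes the openness chosen if $i$ has a patent and $q_i(0)$ if not. Idea $i$ is discovered independently with probability $p_i$; $I$ is the set of discovered ideas. With $q_i$ the openness actually used by $i$, the interaction rate is $\iota(q_i,q_j)=q_iq_j$. For each ordered pair $i\neq j$, independently, $i$ learns directly from $j$ with probability $\iota(q_i,q_j)$, and conditional on this, independently with probability $\delta$, $i$ also learns indirectly through $j$; with $\delta=0$, $I_i$ is the set of discovered ideas $j\neq i$ such that $i$ learns directly from $j$. A technology is a $k$-element $t\subseteq I$; firm $j$ knows $t$ if $t\subseteq\{j\}\cup I_j$. Firm $i$ receives $1$ for each technology $t$ such that $i\in t$, $i$ knows $t$, no idea $j\in t$ with $j\neq i$ is patented, and either $i$ is patented or $i$ is the unique firm knowing $t$; payoff is the expected count minus $c(p_i)$. An equilibrium is a pure-strategy Nash equilibrium; an investment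 equilibrium has all $p_i>0$; it is symmetric if all patented firms choose the same action $(p^*(1),q^*(1))$ and all unpatented firms the same action $(p^*(0),q^*(0))$. Sequences are indexed by $n\to\infty$. *)

From Stdlib Require Import Reals.
From mathcomp Require Import all_boot.

Set Implicit Arguments.
Unset Strict Implicit.
Unset Printing Implicit Defensive.
Open Scope R_scope.

Definition Rsum (I : finType) (F : I -> R) : R :=
  \big[Rplus/R0]_(i : I) F i.
Definition Rprod (I : finType) (F : I -> R) : R :=
  \big[Rmult/R1]_(i : I) F i.

Definition cost_function (c : R -> R) : Prop :=
  (forall p, (0 <= p < 1) -> (0 <= c p)) /\
  c 0 = 0 /\
  (forall x y, (0 <= x) -> (x < y) -> (y < 1) -> (c x < c y)) /\
  (forall x y l, (0 <= x < 1) -> (0 <= y < 1) -> (0 <= l <= 1) ->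
     (c (l * x + (1 - l) * y) <= l * c x + (1 - l) * c y)) /\
  (exists c' : R -> R,
     (forall p, (0 < p < 1) -> derivable_pt_lim c p (c' p)) /\
     (forall eps, (0 < eps) -> exists del, (0 < del) /\
        forall h, (0 < h < del) -> (Rabs ((c h - c 0) / h - c' 0) < eps)) /\
     (forall p, (0 <= p < 1) -> forall eps, (0 < eps) ->
        exists del, (0 < del) /\ forall x, (0 <= x < 1) -> (Rabs (x - p) < del) ->
          (Rabs (c' x - c' p) < eps))) /\
  (forall M, exists eta, (0 < eta) /\
     forall p, (1 - eta < p) -> (p < 1) -> (M < c p)).

(* The random outcome: D = set I of discovered ideas, L = set of ordered *)
(* pairs (i,j) such that i learns directly from j.  Since delta = 0 there *)
(* is no indirect learning.                                               *)

(* probability of outcome (D, L) under investments p and (used) openness q;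
   diagonal pairs (i,i) never belong to L (weight 0 otherwise). *)
Definition outcome_weight (n : nat) (p q : 'I_n -> R)
    (D : {set 'I_n}) (L : {set 'I_n * 'I_n}) : R :=
  (Rprod (fun i : 'I_n => if i \in D then p i else 1 - p i) *
   Rprod (fun x : 'I_n * 'I_n =>
            if x.1 == x.2 then (if x \in L then 0 else 1)
            else if x \in L then q x.1 * q x.2 else 1 - q x.1 * q x.2)).

Definition learned (n : nat) (D : {set 'I_n}) (L : {set 'I_n * 'I_n})
    (i : 'I_n) : {set 'I_n} :=
  [set j in D | (j != i) && ((i, j) \in L)].

Definition knows (n : nat) (D : {set 'I_n}) (L : {set 'I_n * 'I_n})
    (j : 'I_n) (t : {set 'I_n}) : bool :=
  t \subset (j |: learned D L j).

Definition rewarded (k n : nat) (pat : 'I_n -> bool) (D : {set 'I_n})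
    (L : {set 'I_n * 'I_n}) (i : 'I_n) (t : {set 'I_n}) : bool :=
  [&& #|t| == k, t \subset D, i \in t, knows D L i t,
      [forall j in t, (j != i) ==> ~~ pat j] &
      pat i || [forall j, knows D L j t ==> (j == i)]].

Definition reward_count (k n : nat) (pat : 'I_n -> bool) (D : {set 'I_n})
    (L : {set 'I_n * 'I_n}) (i : 'I_n) : nat :=
  #|[set t : {set 'I_n} | rewarded k pat D L i t]|.

Definition payoff (k n : nat) (c : R -> R) (pat : 'I_n -> bool)
    (p q : 'I_n -> R) (i : 'I_n) : R :=
  (Rsum (fun o : {set 'I_n} * {set 'I_n * 'I_n} =>
           outcome_weight p q o.1 o.2 * INR (reward_count k pat o.1 o.2 i))
   - c (p i)).

Definition admissible (p q : R) : Prop := (0 <= p < 1) /\ (0 <= q <= 1).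

Definition update (n : nat) (f : 'I_n -> R) (i : 'I_n) (x : R) : 'I_n -> R :=
  fun j => if j == i then x else f j.

(* pure-strategy Nash equilibrium; p i and q i are the investment and the
   openness actually used by firm i (i.e. q_i(patent status of i)) *)
Definition nash_eq (k n : nat) (c : R -> R) (pat : 'I_n -> bool)
    (p q : 'I_n -> R) : Prop :=
  (forall i, admissible (p i) (q i)) /\
  forall i p' q', admissible p' q' ->
    (payoff k c pat (update p i p') (update q i q') i <= payoff k c pat p q i).

Definition sym_investment_eq (k n : nat) (c : R -> R) (pat : 'I_n -> bool)
    (p1 q1 p0 q0 : R) : Prop :=
  (forall i, (0 < (if pat i then p1 else p0))) /\
  nash_eq k c pat (fun i => if pat i then p1 else p0)
                  (fun i => if pat i then q1 else q0).

(* Under delta = 0 and given the discovered ideas, the learning links of different firms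
   are independent, so the expected reward of firm i is a sum over the k-sets t containing
   i of prod_{j in t} p_j times a product, over the firms j, of the probability that the
   links of j are compatible with i being rewarded for t.  In a symmetric profile the
   payoff of a patented firm is increasing in its own openness, hence q*(1) = 1.  For an
   unpatented firm it is an investment term times
     x^(k-1) (1 - x a)^P (1 - x b)^M (1 - x c)^(k-1)
   in its own openness x, where P = b n counts the patented firms and M the unpatented
   firms outside t.  The first-order condition at x = q*(0), written in u = q*(0)^k, gives
   (k-1) - 2 (k-1) u - n u^2 <= P u <= k - 1, hence n u = (k-1)/b + O(1/n), and
   q*(0) n^(1/k) = (n u)^(1/k) converges to ((k-1)/b)^(1/k). *)

Set Warnings "-notation-overridden,-redundant-canonical-projection,-ambiguous-paths".
From Stdlib Require Import Reals Lra FunctionalExtensionality.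
From Coquelicot Require Import Coquelicot.
From HB Require Import structures.
From mathcomp Require Import all_boot.
Set Implicit Arguments. Unset Strict Implicit. Unset Printing Implicit Defensive.
Open Scope R_scope.

HB.instance Definition _ := Monoid.isComLaw.Build R 0 Rplus
  (fun a b c => esym (Rplus_assoc a b c)) Rplus_comm Rplus_0_l.
HB.instance Definition _ := Monoid.isComLaw.Build R 1 Rmult
  (fun a b c => esym (Rmult_assoc a b c)) Rmult_comm Rmult_1_l.
HB.instance Definition _ := Monoid.isMulLaw.Build R 0 Rmult Rmult_0_l Rmult_0_r.
HB.instance Definition _ := Monoid.isAddLaw.Build R Rmult Rplus
  Rmult_plus_distr_r Rmult_plus_distr_l.

Lemma Rsum_mull (I : finType) (a : R) (F : I -> R) :
  Rsum (fun x => a * F x) = a * Rsum F.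
Proof. by rewrite /Rsum big_distrr. Qed.

Lemma RsumB (I : finType) (F G : I -> R) :
  Rsum (fun x => F x - G x) = Rsum F - Rsum G.
Proof.
rewrite /Rsum; unfold Rminus; rewrite big_split /=; congr (_ + _).
by symmetry; apply: (big_morph Ropp); [move=> *; lra | lra].
Qed.

Lemma RprodM (I : finType) (F G : I -> R) :
  Rprod F * Rprod G = Rprod (fun i => F i * G i).
Proof. by rewrite /Rprod big_split. Qed.

Lemma Rprod_pred1 (I : finType) (i : I) (a : R) :
  Rprod (fun j => if j == i then a else 1) = a.
Proof. by rewrite /Rprod (bigD1 i) //= eqxx big1 ?Rmult_1_r // => j /negbTE ->. Qed.

Lemma Rprod_indicator (I : finType) (P : pred I) :
  Rprod (fun j => if P j then 1 else 0) = if [forall j, P j] then 1 else 0.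
Proof.
case: forallP => [allP | notall].
  by rewrite /Rprod big1 // => j _; rewrite allP.
have [j Pj] : exists j, ~~ P j.
  by apply/existsP; rewrite -negb_forall; apply/forallP.
by rewrite /Rprod (bigD1 j) //= (negbTE Pj) Rmult_0_l.
Qed.

Lemma INR_card (I : finType) (P : pred I) :
  INR #|[set x | P x]| = Rsum (fun x => if P x then 1 else 0).
Proof.
rewrite -sum1_card big_mkcond /Rsum (big_morph INR plus_INR (erefl (INR 0))).
by apply: eq_bigr => x _; rewrite inE; case: (P x).
Qed.

Lemma Rsum_indicator (I : finType) (P : pred I) (F G : I -> R) (a : R) :
  (forall x, P x -> F x * G x = a) ->
  Rsum (fun x => (if P x then 1 else 0) * F x * G x) = INR #|[set x | P x]| * a.
Proof.
move=> PFG; rewrite INR_card /Rsum big_distrl /=; apply: eq_bigr => x _.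
by case: (boolP (P x)) => Px; [rewrite Rmult_assoc PFG // | ]; lra.
Qed.

Definition sprod (I : finType) (A : {set I}) (f : I -> R) : R :=
  Rprod (fun x => if x \in A then f x else 1).

Lemma sprod_const (I : finType) (A : {set I}) (f : I -> R) (a : R) :
  (forall x, x \in A -> f x = a) -> sprod A f = a ^ #|A|.
Proof.
move=> fA; rewrite /sprod /Rprod -big_mkcond /= (eq_bigr (fun _ => a)) //.
by rewrite big_const; elim: #|A| => //= m ->.
Qed.

Lemma Rprod_set_const (I : finType) (A : {set I}) (a : R) :
  Rprod (fun x => if x \in A then a else 1) = a ^ #|A|.
Proof. exact: (sprod_const (f := fun _ => a)). Qed.

Lemma sprodD1 (I : finType) (A : {set I}) (f : I -> R) (x : I) :
  x \in A -> sprod A f = f x * sprod (A :\ x) f.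
Proof.
move=> xA; rewrite /sprod /Rprod (bigD1 x) //= xA; congr (_ * _).
rewrite [RHS](bigD1 x) //= !inE eqxx /= Rmult_1_l.
by apply: eq_bigr => m mx; rewrite !inE mx.
Qed.

(** * Random subsets with independent memberships *)

Definition bernoulli (a : R) (b : bool) : R := if b then a else 1 - a.

Definition set_weight (X : finType) (a : X -> R) (S : {set X}) : R :=
  Rprod (fun x => bernoulli (a x) (x \in S)).

Lemma sum_sets_Rprod (X : finType) (G : X -> bool -> R) :
  Rsum (fun S : {set X} => Rprod (fun x => G x (x \in S))) =
  Rprod (fun x => G x true + G x false).
Proof.
have -> : Rprod (fun x => G x true + G x false) =
    \big[Rmult/1]_(x : X) \big[Rplus/0]_(b : bool) G x b.
  by apply: eq_bigr => x _; rewrite big_bool /= Rplus_comm.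
rewrite /Rsum /Rprod bigA_distr_bigA /=.
rewrite (reindex (fun S : {set X} => [ffun x => x \in S])) /=.
  by apply: eq_bigr => S _; apply: eq_bigr => x _; rewrite ffunE.
exists (fun f : {ffun X -> bool} => [set x | f x]) => [S _ | f _].
  by apply/setP => x; rewrite inE ffunE.
by apply/ffunP => x; rewrite ffunE inE.
Qed.

Lemma expect_Rprod (X : finType) (a : X -> R) (g : X -> bool -> R) :
  Rsum (fun S : {set X} => set_weight a S * Rprod (fun x => g x (x \in S))) =
  Rprod (fun x => a x * g x true + (1 - a x) * g x false).
Proof.
rewrite -(sum_sets_Rprod (fun x b => bernoulli (a x) b * g x b)).
by apply: eq_bigr => S _; rewrite /set_weight RprodM.
Qed.

Lemma sum_set_weight (X : finType) (a : X -> R) :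
  Rsum (fun S : {set X} => set_weight a S) = 1.
Proof.
transitivity (Rsum (fun S : {set X} =>
    set_weight a S * Rprod (fun x => (fun _ _ => 1) x (x \in S)))).
  by apply: eq_bigr => S _; rewrite /Rprod big1 // Rmult_1_r.
by rewrite (expect_Rprod a (fun _ _ => 1)) /Rprod big1 // => x _; lra.
Qed.

Lemma prob_subset (X : finType) (a : X -> R) (A : {set X}) :
  Rsum (fun S : {set X} => set_weight a S * (if A \subset S then 1 else 0)) = sprod A a.
Proof.
have := expect_Rprod a (fun x b => if x \in A then (if b then 1 else 0) else 1).
have -> : Rprod (fun x => a x * (if x \in A then 1 else 1) +
    (1 - a x) * (if x \in A then 0 else 1)) = sprod A a.
  by apply: eq_bigr => x _; case: (x \in A); lra.
move=> <-; apply: eq_bigr => S _; congr (_ * _).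
case: (boolP (A \subset S)) => AS.
  by rewrite /Rprod big1 // => x _; case: ifP => // xA; rewrite (subsetP AS x xA).
case/subsetPn: AS => x xA xS.
by rewrite /Rprod (bigD1 x) //= xA (negbTE xS) Rmult_0_l.
Qed.

Definition row_of (I : finType) (L : {set I * I}) (j : I) : {set I} :=
  [set m | (j, m) \in L].

Lemma expect_rows (I : finType) (a : I * I -> R) (H : I -> {set I} -> R) :
  Rsum (fun L : {set I * I} => set_weight a L * Rprod (fun j => H j (row_of L j))) =
  Rprod (fun j => Rsum (fun s : {set I} => set_weight (fun m => a (j, m)) s * H j s)).
Proof.
rewrite /Rsum /Rprod bigA_distr_bigA /=.
rewrite (reindex (fun f : {ffun I -> {set I}} => [set x | x.2 \in f x.1])) /=.
  apply: eq_bigr => f _.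
  have rowE j : row_of [set x | x.2 \in f x.1] j = f j.
    by apply/setP => m; rewrite !inE.
  rewrite /set_weight /Rprod.
  have -> : \big[Rmult/1]_(x : I * I) bernoulli (a x) (x \in [set x | x.2 \in f x.1]) =
      \big[Rmult/1]_(j : I) \big[Rmult/1]_(m : I) bernoulli (a (j, m)) (m \in f j).
    by rewrite pair_big /=; apply: eq_bigr => [[j m]] _; rewrite inE.
  by rewrite -big_split /=; apply: eq_bigr => j _; rewrite rowE.
exists (fun L : {set I * I} => [ffun j => row_of L j]) => [f _ | L _].
  by apply/ffunP => j; rewrite ffunE; apply/setP => m; rewrite !inE.
by apply/setP => [[j m]]; rewrite !inE ffunE inE.
Qed.

(** * Expected reward count *)

Definition link_prob (n : nat) (q : 'I_n -> R) (x : 'I_n * 'I_n) : R :=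
  if x.1 == x.2 then 0 else q x.1 * q x.2.

Lemma outcome_weightE n (p q : 'I_n -> R) D L :
  outcome_weight p q D L = set_weight p D * set_weight (link_prob q) L.
Proof.
rewrite /outcome_weight /set_weight; congr (_ * _); apply: eq_bigr => x _.
by rewrite /link_prob /bernoulli; case: (x.1 == x.2); case: (x \in L) => //; lra.
Qed.

Lemma knowsE n (D : {set 'I_n}) (L : {set 'I_n * 'I_n}) (j : 'I_n) (t : {set 'I_n}) :
  t \subset D -> knows D L j t = (t :\ j \subset row_of L j).
Proof.
move=> tD; rewrite /knows; apply/subsetP/subsetP => h m.
  rewrite !inE => /andP [mj mt]; move: (h m mt); rewrite !inE (negbTE mj) /=.
  by move=> /andP [_ ->].
move=> mt; rewrite !inE; case: (eqVneq m j) => //= mj.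
have := h m; rewrite !inE mj mt => /(_ isT) ->.
by rewrite (subsetP tD m mt).
Qed.

(* The conditions of [rewarded] that do not depend on the outcome. *)
Definition eligible (k n : nat) (pat : 'I_n -> bool) (i : 'I_n) (t : {set 'I_n}) : bool :=
  [&& #|t| == k, i \in t & [forall j in t, (j != i) ==> ~~ pat j]].

Definition row_condition (n : nat) (pat : 'I_n -> bool) (i : 'I_n) (t : {set 'I_n})
    (j : 'I_n) (s : {set 'I_n}) : bool :=
  if j == i then t :\ j \subset s else pat i || ~~ (t :\ j \subset s).

Lemma sole_knowerE (I : finType) (i : I) (b : bool) (K : pred I) :
  K i && (b || [forall j, K j ==> (j == i)]) =
  [forall j, if j == i then K j else b || ~~ K j].
Proof.
apply/idP/forallP.
  case/andP => Ki h j; case: eqP => [-> | /eqP ji] //.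
  case/orP: h => [-> // | /forallP /(_ j)].
  by rewrite (negbTE ji) implybF => ->; rewrite orbT.
move=> h; move: (h i); rewrite eqxx => -> /=.
case: b h => //= h; apply/forallP => j; apply/implyP => Kj.
by move: (h j); case: eqP => // _; rewrite Kj.
Qed.

(* Once [t \subset D], being rewarded for [t] is a separate condition on each row of [L]. *)
Lemma rewarded_indicator k n (pat : 'I_n -> bool) D L (i : 'I_n) (t : {set 'I_n}) :
  (if rewarded k pat D L i t then 1 else 0) =
  (if eligible k pat i t then 1 else 0) * (if t \subset D then 1 else 0) *
  Rprod (fun j => if row_condition pat i t j (row_of L j) then 1 else 0).
Proof.
rewrite Rprod_indicator /rewarded /eligible /row_condition.
case: (#|t| == k) => /=; last by rewrite !Rmult_0_l.
case: (i \in t) => /=; rewrite ?andbF; last by rewrite !Rmult_0_l.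
case: [forall j in t, (j != i) ==> ~~ pat j] => /=; rewrite ?andbF; last by rewrite !Rmult_0_l.
case: (boolP (t \subset D)) => tD /=; last by rewrite Rmult_1_l !Rmult_0_l.
have -> : [forall j, knows D L j t ==> (j == i)] =
    [forall j, (t :\ j \subset row_of L j) ==> (j == i)].
  by apply: eq_forallb => j; rewrite knowsE.
by rewrite knowsE // (sole_knowerE i (pat i) (fun j => t :\ j \subset row_of L j)) !Rmult_1_l.
Qed.

Definition row_prob (n : nat) (pat : 'I_n -> bool) (q : 'I_n -> R) (i : 'I_n)
    (t : {set 'I_n}) (j : 'I_n) : R :=
  if j == i then sprod (t :\ i) (fun m => q i * q m)
  else if pat i then 1 else 1 - sprod (t :\ j) (fun m => q j * q m).

Lemma sprod_link_prob n (q : 'I_n -> R) (j : 'I_n) (A : {set 'I_n}) :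
  sprod (A :\ j) (fun m => link_prob q (j, m)) = sprod (A :\ j) (fun m => q j * q m).
Proof.
apply: eq_bigr => m _; case: (boolP (m \in A :\ j)) => //.
by rewrite !inE /link_prob /= eq_sym => /andP [/negbTE ->].
Qed.

Lemma expect_row_condition n (pat : 'I_n -> bool) (q : 'I_n -> R) (i : 'I_n)
    (t : {set 'I_n}) (j : 'I_n) :
  Rsum (fun s : {set 'I_n} => set_weight (fun m => link_prob q (j, m)) s *
                             (if row_condition pat i t j s then 1 else 0)) =
  row_prob pat q i t j.
Proof.
rewrite /row_condition /row_prob; case: eqP => [-> | ji].
  by rewrite prob_subset sprod_link_prob.
case: (pat i) => /=.
  rewrite -[RHS](sum_set_weight (fun m => link_prob q (j, m))).
  by apply: eq_bigr => s _; rewrite Rmult_1_r.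
rewrite -sprod_link_prob -prob_subset.
rewrite -[X in X - _](sum_set_weight (fun m => link_prob q (j, m))) -RsumB.
apply: eq_bigr => s _; case: (t :\ j \subset s) => /=.
  by rewrite Rmult_0_r Rmult_1_r Rminus_diag.
by rewrite Rmult_0_r Rmult_1_r Rminus_0_r.
Qed.

Lemma prob_rewarded k n (pat : 'I_n -> bool) (p q : 'I_n -> R) (i : 'I_n) (t : {set 'I_n}) :
  Rsum (fun o : {set 'I_n} * {set 'I_n * 'I_n} =>
     outcome_weight p q o.1 o.2 * (if rewarded k pat o.1 o.2 i t then 1 else 0)) =
  (if eligible k pat i t then 1 else 0) * sprod t p * Rprod (row_prob pat q i t).
Proof.
set e := if eligible k pat i t then 1 else 0.
set H := fun j s => if row_condition pat i t j s then 1 else 0.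
transitivity (\big[Rplus/0]_(D : {set 'I_n}) \big[Rplus/0]_(L : {set 'I_n * 'I_n})
    (e * (set_weight p D * (if t \subset D then 1 else 0)) *
     (set_weight (link_prob q) L * Rprod (fun j => H j (row_of L j))))).
  have regroup (a b x y z : R) : a * b * (x * y * z) = x * (a * y) * (b * z) by ring.
  rewrite pair_big /=; apply: eq_bigr => -[D L] _ /=.
  by rewrite outcome_weightE rewarded_indicator regroup.
under eq_bigr => D _ do rewrite -big_distrr.
rewrite -big_distrl /= -/(Rsum _) -/(Rsum _) Rsum_mull prob_subset expect_rows.
by congr (_ * _); apply: eq_bigr => j _; rewrite expect_row_condition.
Qed.

Lemma expected_reward k n (pat : 'I_n -> bool) (p q : 'I_n -> R) (i : 'I_n) :
  Rsum (fun o : {set 'I_n} * {set 'I_n * 'I_n} =>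
     outcome_weight p q o.1 o.2 * INR (reward_count k pat o.1 o.2 i)) =
  Rsum (fun t : {set 'I_n} =>
     (if eligible k pat i t then 1 else 0) * sprod t p * Rprod (row_prob pat q i t)).
Proof.
transitivity (Rsum (fun o : {set 'I_n} * {set 'I_n * 'I_n} =>
    Rsum (fun t : {set 'I_n} => outcome_weight p q o.1 o.2 *
      (if rewarded k pat o.1 o.2 i t then 1 else 0)))).
  by apply: eq_bigr => o _; rewrite /reward_count INR_card Rsum_mull.
by rewrite /Rsum exchange_big /=; apply: eq_bigr => t _; apply: prob_rewarded.
Qed.

(** * Payoffs in a symmetric profile *)

Definition profile (n : nat) (pat : 'I_n -> bool) (a1 a0 : R) : 'I_n -> R :=
  fun j => if pat j then a1 else a0.

Lemma update_id (n : nat) (f : 'I_n -> R) (i : 'I_n) : update f i (f i) = f.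
Proof. by apply: functional_extensionality => j; rewrite /update; case: eqP => // ->. Qed.

Lemma card_setD1 (I : finType) (A : {set I}) (x : I) : x \in A -> #|A :\ x| = (#|A| - 1)%N.
Proof. by move=> xA; rewrite (cardsD1 x A) xA add1n subn1. Qed.

Lemma setD1_id (I : finType) (A : {set I}) (x : I) : x \notin A -> A :\ x = A.
Proof. by move=> xA; apply/setDidPl; rewrite disjoint_sym disjoints1. Qed.

Section SymmetricProfile.
Variables (k n : nat) (pat : 'I_n -> bool) (p1 q1 p0 q0 : R) (i : 'I_n).

Let pp (p' : R) := update (profile pat p1 p0) i p'.
Let qq (q' : R) := update (profile pat q1 q0) i q'.

Lemma eligibleP t : eligible k pat i t ->
  [/\ #|t| = k, i \in t & forall j, j \in t -> j != i -> pat j = false].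
Proof.
case/and3P => /eqP -> it /forallP h; split => // j jt ji.
by move: (h j); rewrite jt ji /= => /negbTE.
Qed.

Lemma sprod_eligible_invest t p' : eligible k pat i t ->
  sprod t (pp p') = p' * p0 ^ (k - 1).
Proof.
move=> /eligibleP [tk it tpat].
rewrite (sprodD1 _ it) /pp /update eqxx; congr (_ * _).
rewrite -tk -(card_setD1 it); apply: sprod_const => x; rewrite !inE => /andP [xi xt].
by rewrite (negbTE xi) /profile tpat.
Qed.

Lemma row_prod_patented t q' : pat i = true -> eligible k pat i t ->
  Rprod (row_prob pat (qq q') i t) = (q' * q0) ^ (k - 1).
Proof.
move=> pi /eligibleP [tk it tpat]; rewrite /row_prob pi.
rewrite -[RHS](Rprod_pred1 i); apply: eq_bigr => j _; case: eqP => // _.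
rewrite -tk -(card_setD1 it); apply: sprod_const => x; rewrite !inE => /andP [xi xt].
by rewrite /qq /update eqxx (negbTE xi) /profile tpat.
Qed.

(* For an unpatented [i] of openness [q'], the probabilities that a firm [j != i] fails
   to know [t]: [j] in [t], [j] patented, [j] unpatented outside [t]. *)
Definition unaware_member q' := 1 - (q0 * q') * (q0 * q0) ^ (k - 2).
Definition unaware_patented q' := 1 - (q1 * q') * (q1 * q0) ^ (k - 1).
Definition unaware_outsider q' := 1 - (q0 * q') * (q0 * q0) ^ (k - 1).

Lemma row_prob_unpatented t q' j : pat i = false -> eligible k pat i t ->
  row_prob pat (qq q') i t j =
  (if j == i then (q' * q0) ^ (k - 1) else 1) *
  ((if j \in t :\ i then unaware_member q' else 1) *
   ((if j \in [set j | pat j] then unaware_patented q' else 1) *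
    (if j \in [set j | (j \notin t) && ~~ pat j] then unaware_outsider q' else 1))).
Proof.
move=> pi /eligibleP [tk it tpat].
have cti : #|t :\ i| = (k - 1)%N by rewrite card_setD1 // tk.
have qqi : qq q' i = q' by rewrite /qq /update eqxx.
have qqt m : m \in t -> m != i -> qq q' m = q0.
  by move=> mt mi; rewrite /qq /update (negbTE mi) /profile tpat.
rewrite /row_prob; case: eqP => [-> | /eqP ji].
  rewrite !inE eqxx pi it /= !Rmult_1_r -cti.
  by apply: sprod_const => x; rewrite !inE => /andP [xi xt]; rewrite qqi qqt.
rewrite pi Rmult_1_l !inE ji /=.
case: (boolP (j \in t)) => jt /=.
  rewrite tpat // !Rmult_1_r /unaware_member.
  have itj : i \in t :\ j by rewrite !inE eq_sym ji.
  rewrite (sprodD1 _ itj) qqi qqt //.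
  have ctji : #|(t :\ j) :\ i| = (k - 2)%N by rewrite !card_setD1 // tk -subnDA.
  congr (1 - _ * _); rewrite -ctji.
  by apply: sprod_const => x; rewrite !inE => /andP [xi /andP [xj xt]]; rewrite qqt.
rewrite Rmult_1_l setD1_id // (sprodD1 _ it) qqi.
have -> : sprod (t :\ i) (fun m => qq q' j * qq q' m) = (qq q' j * q0) ^ (k - 1).
  by rewrite -cti; apply: sprod_const => x; rewrite !inE => /andP [xi xt]; rewrite (qqt x).
rewrite /qq /update (negbTE ji) /profile /unaware_patented /unaware_outsider.
by case: (pat j) => /=; lra.
Qed.

Lemma card_unpatented_outsiders t : pat i = false -> eligible k pat i t ->
  #|[set j | (j \notin t) && ~~ pat j]| = (n - k - #|[set j | pat j]|)%N.
Proof.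
move=> pi /eligibleP [tk it tpat].
have -> : [set j | (j \notin t) && ~~ pat j] = ~: (t :|: [set j | pat j]).
  by apply/setP => j; rewrite !inE negb_or.
have tpat0 : t :&: [set j | pat j] = set0.
  apply/setP => j; rewrite !inE; apply/andP => -[jt pj].
  by move: pj; case: (eqVneq j i) => [-> | ji]; rewrite ?pi ?tpat.
by rewrite cardsCs setCK card_ord cardsU tk tpat0 cards0 subn0 subnDA.
Qed.

Lemma payoff_patented (c : R -> R) p' q' : pat i = true ->
  payoff k c pat (pp p') (qq q') i =
  INR #|[set t | eligible k pat i t]| * (p' * p0 ^ (k - 1) * (q' * q0) ^ (k - 1)) - c p'.
Proof.
move=> pi; rewrite /payoff expected_reward [pp p' i]/pp /update eqxx; congr (_ - _).
apply: Rsum_indicator => t et.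
by rewrite sprod_eligible_invest // row_prod_patented.
Qed.

Lemma payoff_unpatented (c : R -> R) p' q' : pat i = false ->
  payoff k c pat (pp p') (qq q') i =
  INR #|[set t | eligible k pat i t]| *
   (p' * p0 ^ (k - 1) * ((q' * q0) ^ (k - 1) * (unaware_member q' ^ (k - 1) *
     (unaware_patented q' ^ #|[set j | pat j]| *
      unaware_outsider q' ^ (n - k - #|[set j | pat j]|))))) - c p'.
Proof.
move=> pi; rewrite /payoff expected_reward [pp p' i]/pp /update eqxx; congr (_ - _).
apply: Rsum_indicator => t et.
rewrite sprod_eligible_invest //; congr (_ * _).
rewrite /Rprod (eq_bigr _ (fun j _ => row_prob_unpatented q' j pi et)) -/(Rprod _).
rewrite -!RprodM Rprod_pred1 !Rprod_set_const.
have [tk it _] := eligibleP et.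
by rewrite card_setD1 // tk card_unpatented_outsiders.
Qed.

End SymmetricProfile.

Lemma sym_eq_deviation k n c pat p1 q1 p0 q0 (i : 'I_n) p' q' :
  sym_investment_eq k c pat p1 q1 p0 q0 -> admissible p' q' ->
  payoff k c pat (update (profile pat p1 p0) i p') (update (profile pat q1 q0) i q') i <=
  payoff k c pat (update (profile pat p1 p0) i (profile pat p1 p0 i))
    (update (profile pat q1 q0) i (profile pat q1 q0 i)) i.
Proof. by move=> [_ [_ nash]] adm; rewrite !update_id; apply: nash. Qed.

(** * The first-order condition in the openness *)

Definition openness_gain (K P M : nat) (a b c : R) (x : R) : R :=
  x ^ K * (1 - x * a) ^ P * (1 - x * b) ^ M * (1 - x * c) ^ K.

Lemma INR_mul_pow_pred (y : R) (m : nat) : y <> 0 ->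
  INR m * y ^ Init.Nat.pred m = INR m * y ^ m / y.
Proof.
by move=> y0; case: m => [|m] /=; [rewrite Rmult_0_l /Rdiv Rmult_0_l | field].
Qed.

(* At an interior maximum the logarithmic derivative of [openness_gain] vanishes. *)
Lemma openness_gain_foc (K P M : nat) (a b c x : R) : 0 < x < 1 ->
  0 < 1 - x * a -> 0 < 1 - x * b -> 0 < 1 - x * c ->
  (forall y, 0 < y < 1 -> openness_gain K P M a b c y <= openness_gain K P M a b c x) ->
  INR K / x = INR P * a / (1 - x * a) + INR M * b / (1 - x * b) + INR K * c / (1 - x * c).
Proof.
move=> [x0 x1] ha hb hc xmax.
set f := openness_gain K P M a b c.
set r := INR K / x - INR P * a / (1 - x * a) - INR M * b / (1 - x * b)
  - INR K * c / (1 - x * c).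
have df : is_derive f x (f x * r).
  rewrite /f /openness_gain; auto_derive => //.
  rewrite -!/(Rminus 1 _) !INR_mul_pow_pred; try lra.
  by rewrite /r /openness_gain; field; repeat split; lra.
have df' := proj1 (is_derive_Reals _ _ _) df.
have f'0 : f x * r = 0.
  have dfx : derivable_pt f x by exists (f x * r).
  rewrite -(deriv_maximum f 0 1 x dfx x0 x1 (fun y y0 y1 => xmax y (conj y0 y1))).
  by symmetry; apply: derive_pt_eq_0.
have fx0 : 0 < f x.
  by rewrite /f /openness_gain; repeat apply: Rmult_lt_0_compat; apply: pow_lt.
have : r = 0 by apply: (Rmult_eq_reg_l (f x)); lra.
rewrite /r; lra.
Qed.

Lemma foc_bounds (K P M n u v : R) : 0 <= K -> 0 <= P -> 0 <= M <= n -> 0 < u < 1 ->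
  0 <= v <= u ->
  K = P * u / (1 - u) + M * (u * u) / (1 - u * u) + K * v / (1 - v) ->
  K - 2 * K * u - n * (u * u) <= P * u <= K.
Proof.
move=> K0 P0 [M0 Mn] [u0 u1] [v0 vu] foc.
have div_ge0 x y : 0 <= x -> 0 < y -> 0 <= x / y.
  by move=> *; apply: Rmult_le_pos => //; apply/Rlt_le/Rinv_0_lt_compat.
have patented : P * u / (1 - u) * (1 - u) = P * u by field; lra.
have outsiders : M * (u * u) / (1 - u * u) * (1 - u) <= n * (u * u).
  have -> : M * (u * u) / (1 - u * u) * (1 - u) = M * (u * u) / (1 + u) by field; nra.
  apply: (Rmult_le_reg_r (1 + u)); first lra.
  have -> : M * (u * u) / (1 + u) * (1 + u) = M * (u * u) by field; lra.
  have := Rmult_le_pos _ _ (Rle_trans _ _ _ M0 Mn) (Rlt_le _ _ u0); nra.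
have members : K * v / (1 - v) * (1 - u) <= K * u.
  apply: (Rmult_le_reg_r (1 - v)); first lra.
  have -> : K * v / (1 - v) * (1 - u) * (1 - v) = K * v * (1 - u) by field; lra.
  nra.
have := f_equal (Rmult^~ (1 - u)) foc; rewrite /= !Rmult_plus_distr_r patented => foc'.
have := div_ge0 (M * (u * u)) (1 - u * u); have := div_ge0 (K * v) (1 - v).
split; nra.
Qed.

(** * Equilibrium opennesses *)

Lemma best_response_openness (A w p0 q0 : R) (G c : R -> R) :
  0 <= A -> 0 < w -> 0 < p0 < 1 -> c 0 = 0 -> 0 < c p0 -> 0 <= q0 <= 1 ->
  (forall p' q', admissible p' q' ->
     A * (p' * w * G q') - c p' <= A * (p0 * w * G q0) - c p0) ->
  0 < G q0 /\ forall q', 0 <= q' <= 1 -> G q' <= G q0.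
Proof.
move=> A0 w0 [p00 p01] c0 cp0 q0I dev.
have gain : 0 < A * (p0 * w * G q0).
  by have := dev 0 q0 (conj (conj (Rle_refl 0) Rlt_0_1) q0I); rewrite c0; lra.
have Apw : 0 < A * (p0 * w).
  have pw : 0 < p0 * w by nra.
  case: (Rle_lt_or_eq_dec _ _ A0) => [A_pos | A_eq0]; first nra.
  by rewrite -A_eq0 Rmult_0_l in gain; lra.
split; first nra.
move=> q' q'I; apply: (Rmult_le_reg_l _ _ _ Apw).
by have := dev p0 q' (conj (conj (Rlt_le _ _ p00) p01) q'I); lra.
Qed.

Lemma patented_full_openness K n c pat p1 q1 p0 q0 (i j : 'I_n) :
  cost_function c -> sym_investment_eq K.+2 c pat p1 q1 p0 q0 ->
  pat i = true -> pat j = false -> q1 = 1 /\ 0 < q0.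
Proof.
move=> [_ [c0 [c_incr _]]] heq pi pj; have [pos [adm _]] := heq.
have [[_ p11] q1I] : admissible p1 q1 by move: (adm i); rewrite pi.
have [_ [q00 _]] : admissible p0 q0 by move: (adm j); rewrite pj.
have p10 : 0 < p1 by move: (pos i); rewrite pi.
have p00 : 0 < p0 by move: (pos j); rewrite pj.
set A := INR #|[set t | eligible K.+2 pat i t]|.
have dev p' q' : admissible p' q' ->
    A * (p' * p0 ^ K.+1 * (q' * q0) ^ K.+1) - c p' <=
    A * (p1 * p0 ^ K.+1 * (q1 * q0) ^ K.+1) - c p1.
  by move=> a; have := sym_eq_deviation i heq a; rewrite !payoff_patented // /profile pi.
have cp1 : 0 < c p1 by rewrite -c0; apply: c_incr; lra.
have [G_pos G_max] :=
  best_response_openness (pos_INR _) (pow_lt _ K.+1 p00) (conj p10 p11) c0 cp1 q1I dev.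
have q0_pos : 0 < q0.
  case: (Rle_lt_or_eq_dec _ _ q00) => // q0_eq0.
  by rewrite -q0_eq0 Rmult_0_r (pow_i _ (Nat.lt_0_succ K)) in G_pos; lra.
split => //.
have := G_max 1 (conj Rle_0_1 (Rle_refl 1)); rewrite !Rpow_mult_distr pow1 Rmult_1_l => le1.
have q1K : 1 <= q1 ^ K.+1 by apply: (Rmult_le_reg_r (q0 ^ K.+1)); [apply: pow_lt | lra].
case: (Rle_lt_or_eq_dec _ _ (proj2 q1I)) => // q1_lt1.
by have := pow_lt_1_compat q1 K.+1 (conj (proj1 q1I) q1_lt1) (Nat.lt_0_succ K); lra.
Qed.

Definition unpatented_gain (K P M : nat) (q0 : R) : R -> R :=
  openness_gain K.+1 P M (q0 ^ K.+1) (q0 * (q0 * q0) ^ K.+1) (q0 * (q0 * q0) ^ K).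

Lemma unpatented_factorE (K P M : nat) (q0 x : R) :
  (x * q0) ^ (K.+2 - 1) * (unaware_member K.+2 q0 x ^ (K.+2 - 1) *
    (unaware_patented K.+2 1 q0 x ^ P * unaware_outsider K.+2 q0 x ^ M)) =
  q0 ^ K.+1 * unpatented_gain K P M q0 x.
Proof.
rewrite /unaware_member /unaware_patented /unaware_outsider /unpatented_gain /openness_gain.
rewrite !subSS !subn0 !Rmult_1_l.
have -> : 1 - q0 * x * (q0 * q0) ^ K = 1 - x * (q0 * (q0 * q0) ^ K) by ring.
have -> : 1 - q0 * x * (q0 * q0) ^ K.+1 = 1 - x * (q0 * (q0 * q0) ^ K.+1) by ring.
by rewrite Rpow_mult_distr; ring.
Qed.

Lemma unpatented_gain_max K n c pat p1 p0 q0 (i : 'I_n) :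
  cost_function c -> sym_investment_eq K.+2 c pat p1 1 p0 q0 -> pat i = false -> 0 < q0 ->
  let g := unpatented_gain K #|[set j | pat j]| (n - K.+2 - #|[set j | pat j]|) q0 in
  0 < g q0 /\ forall y, 0 <= y <= 1 -> g y <= g q0.
Proof.
move=> [_ [c0 [c_incr _]]] heq pi q0_pos g; have [pos [adm _]] := heq.
have [[_ p01] q0I] : admissible p0 q0 by move: (adm i); rewrite pi.
have p00 : 0 < p0 by move: (pos i); rewrite pi.
have cp0 : 0 < c p0 by rewrite -c0; apply: c_incr; lra.
set A := INR #|[set t | eligible K.+2 pat i t]|.
have dev p' q' : admissible p' q' ->
    A * (p' * p0 ^ K.+1 * (q0 ^ K.+1 * g q')) - c p' <=
    A * (p0 * p0 ^ K.+1 * (q0 ^ K.+1 * g q0)) - c p0.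
  move=> adm'; have := sym_eq_deviation i heq adm'.
  by rewrite !payoff_unpatented // /profile pi !unpatented_factorE.
have [G_pos G_max] := best_response_openness (G := fun x => q0 ^ K.+1 * g x)
  (pos_INR _) (pow_lt _ K.+1 p00) (conj p00 p01) c0 cp0 q0I dev.
have qK_pos := pow_lt _ K.+1 q0_pos.
split; first by nra.
by move=> y yI; apply: (Rmult_le_reg_l (q0 ^ K.+1)) => //; apply: G_max.
Qed.

Lemma openness_powers (K : nat) (q : R) : 0 < q < 1 ->
  0 < q ^ K.+2 < 1 /\ 0 <= q ^ K.+1 * q ^ K.+1 <= q ^ K.+2.
Proof.
move=> [q0 q1]; split.
  split; first exact: pow_lt.
  by apply: (proj2 (pow_lt_1_compat _ _ _ (Nat.lt_0_succ K.+1))); lra.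
split; first exact: Rle_0_sqr.
have qK : q ^ K <= 1 by rewrite -(pow1 K); apply: pow_incr; lra.
have qK1 : q ^ K.+1 <= q by change (q ^ K.+1) with (q * q ^ K); nra.
by change (q ^ K.+2) with (q * q ^ K.+1); have := pow_lt q K.+1 q0; nra.
Qed.

Lemma unpatented_foc K n c pat p1 p0 q0 (i : 'I_n) :
  cost_function c -> sym_investment_eq K.+2 c pat p1 1 p0 q0 ->
  pat i = false -> (0 < #|[set j | pat j]|)%N -> 0 < q0 ->
  q0 < 1 /\
  INR K.+1 = INR #|[set j | pat j]| * q0 ^ K.+2 / (1 - q0 ^ K.+2) +
    INR (n - K.+2 - #|[set j | pat j]|) * (q0 ^ K.+2 * q0 ^ K.+2) /
      (1 - q0 ^ K.+2 * q0 ^ K.+2) +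
    INR K.+1 * (q0 ^ K.+1 * q0 ^ K.+1) / (1 - q0 ^ K.+1 * q0 ^ K.+1).
Proof.
move=> hc heq pi P_pos q0_pos.
have [g_pos g_max] := unpatented_gain_max hc heq pi q0_pos.
move: g_pos g_max; rewrite /unpatented_gain.
set a := q0 ^ K.+1; set b := q0 * (q0 * q0) ^ K.+1; set m := q0 * (q0 * q0) ^ K.
move=> g_pos g_max.
have qa : q0 * a = q0 ^ K.+2 by [].
have qb : q0 * b = q0 ^ K.+2 * q0 ^ K.+2 by rewrite /b -Rmult_assoc -Rpow_mult_distr.
have qm : q0 * m = q0 ^ K.+1 * q0 ^ K.+1 by rewrite /m -Rmult_assoc -Rpow_mult_distr.
have q0_lt1 : q0 < 1.
  have [_ [adm _]] := heq.
  have [_ [_ q0_le1]] : admissible p0 q0 by move: (adm i); rewrite pi.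
  case: (Rle_lt_or_eq_dec _ _ q0_le1) => // q0_eq1.
  move: g_pos; rewrite /openness_gain /a q0_eq1 pow1.
  have -> : 1 - 1 * 1 = 0 by ring.
  by rewrite (pow_i _ (elimT ltP P_pos)) Rmult_0_r !Rmult_0_l; lra.
have [[u_pos u_lt1] [v_pos v_le_u]] := openness_powers K (conj q0_pos q0_lt1).
have foc := openness_gain_foc (a := a) (b := b) (c := m) (conj q0_pos q0_lt1)
  ltac:(rewrite qa; lra) ltac:(rewrite qb; nra) ltac:(rewrite qm; lra)
  (fun y yI => g_max y (conj (Rlt_le _ _ (proj1 yI)) (Rlt_le _ _ (proj2 yI)))).
split => //; rewrite -qa -qb -qm.
have -> : INR K.+1 = q0 * (INR K.+1 / q0) by field; lra.
by rewrite {1}foc; field; rewrite qa qb qm; repeat split; nra.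
Qed.

Lemma sym_eq_openness_bounds K n c (pat : 'I_n -> bool) p1 q1 p0 q0 :
  cost_function c -> (0 < #|[set j | pat j]| < n)%N ->
  sym_investment_eq K.+2 c pat p1 q1 p0 q0 ->
  0 < q0 /\
  INR K.+1 - 2 * INR K.+1 * q0 ^ K.+2 - INR n * (q0 ^ K.+2 * q0 ^ K.+2) <=
  INR #|[set j | pat j]| * q0 ^ K.+2 <= INR K.+1.
Proof.
move=> hc /andP [P_pos P_lt_n] heq.
have [i pi] : exists i, pat i = true.
  by case/card_gt0P: P_pos => i; rewrite inE; exists i.
have [j pj] : exists j, pat j = false.
  case: (pickP (fun j => ~~ pat j)) => [j /negbTE pj | allpat]; first by exists j.
  have patT : [set j | pat j] = setT.
    by apply/setP => j; rewrite !inE; move: (allpat j) => /negbFE.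
  by move: P_lt_n; rewrite patT cardsT card_ord ltnn.
have [q1_eq1 q0_pos] := patented_full_openness hc heq pi pj; subst q1.
have [q0_lt1 foc] := unpatented_foc hc heq pj P_pos q0_pos.
have [u01 v0u] := openness_powers K (conj q0_pos q0_lt1).
split => //; apply: foc_bounds foc => //; try exact: pos_INR.
by split; [exact: pos_INR | apply/le_INR/leP; rewrite -subnDA leq_subr].
Qed.

(** * Asymptotics *)

Lemma scaled_openness_error (K b n u : R) : 0 < K -> 0 < b -> 0 < n -> 0 < u ->
  K - 2 * K * u - n * (u * u) <= b * n * u <= K ->
  Rabs (n * u - K / b) <= (2 * K * K / b + K * K / (b * b)) / b / n.
Proof.
move=> K0 b0 n0 u0 [lo hi].
set w := K / (b * n).
have bnw : b * n * w = K by rewrite /w; field; lra.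
have u_le_w : u <= w by apply: (Rmult_le_reg_l (b * n)); [nra | lra].
have key : K - 2 * K * w - n * (w * w) <= b * n * u.
  have uw : u * u <= w * w by apply: Rmult_le_compat; lra.
  have := Rmult_le_compat_l n _ _ (Rlt_le _ _ n0) uw; nra.
have -> : (2 * K * K / b + K * K / (b * b)) / b / n = (2 * K * w + n * (w * w)) / b.
  by rewrite /w; field; lra.
have -> : n * u - K / b = (b * n * u - K) / b by field; lra.
have ib : 0 < / b by apply: Rinv_0_lt_compat.
rewrite /Rdiv; apply: Rabs_le; split; nra.
Qed.

Lemma Un_cv_dist_le_inv (N : nat -> nat) (z : nat -> R) (l C : R) :
  (forall M : nat, exists j0 : nat, forall j, (j0 <= j)%N -> (M <= N j)%N) ->
  (forall j, (0 < N j)%N) ->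
  (forall j, Rabs (z j - l) <= C / INR (N j)) -> Un_cv z l.
Proof.
move=> N_unbdd N_pos zl eps eps_pos.
have [m m_gt] := INR_unbounded (C / eps).
have [j0 j0N] := N_unbdd m.
exists j0 => j /leP jj0; rewrite /R_dist; apply: Rle_lt_trans (zl j) _.
have Nj_pos : 0 < INR (N j) by apply/lt_0_INR/ltP.
have mN : INR m <= INR (N j) by apply/le_INR/leP/j0N.
apply: (Rmult_lt_reg_r (INR (N j))) => //.
have -> : C / INR (N j) * INR (N j) = C by field; lra.
have : C < eps * INR m.
  by have := Rmult_lt_compat_l eps _ _ eps_pos m_gt; rewrite /Rdiv -Rmult_assoc Rinv_r_simpl_m; lra.
nra.
Qed.

Lemma Rpower_Un_cv (z : nat -> R) (l y : R) : 0 < l -> Un_cv z l ->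
  Un_cv (fun j => Rpower (z j) y) (Rpower l y).
Proof.
move=> l_pos zl; apply: (continuity_seq (fun x => Rpower x y)) => //.
by apply: derivable_continuous_pt; exists (y * Rpower l (y - 1)); apply: derivable_pt_lim_power.
Qed.

Lemma mul_Rpower_inv (n q : R) (k : nat) : 0 < n -> 0 < q -> (0 < k)%N ->
  q * Rpower n (/ INR k) = Rpower (n * q ^ k) (/ INR k).
Proof.
move=> n_pos q_pos k_pos.
rewrite -Rpower_mult_distr //; last exact: pow_lt.
rewrite -Rpower_pow // Rpower_mult Rinv_r; last by apply: not_0_INR; case: k k_pos.
by rewrite Rpower_1 // Rmult_comm.
Qed.

Lemma fraction_card_bounds (m n : nat) (b : R) :
  0 < b < 1 -> (0 < n)%N -> INR m = b * INR n -> (0 < m < n)%N.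
Proof.
move=> b01 n_pos mbn; have n0 : 0 < INR n by apply/lt_0_INR/ltP.
apply/andP; split; apply/ltP.
  by apply: INR_lt; rewrite mbn /=; nra.
by apply: INR_lt; rewrite mbn; nra.
Qed.

Theorem mainTheorem17
  (k : nat) (hk : (2 < k)%N)
  (b : R) (hb : (0 < b < 1))
  (c : R -> R) (hc : cost_function c)
  (N : nat -> nat) (hN2 : forall j, (2 <= N j)%N)
  (hNinf : forall M : nat, exists j0 : nat, forall j, (j0 <= j)%N -> (M <= N j)%N)
  (pat : forall j, 'I_(N j) -> bool)
  (hpat : forall j, INR #|[set i | pat j i]| = (b * INR (N j)))
  (p1 q1 p0 q0 : nat -> R)
  (heq : forall j, sym_investment_eq k c (pat j) (p1 j) (q1 j) (p0 j) (q0 j)) :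
  Un_cv (fun j => (q0 j * Rpower (INR (N j)) (/ INR k)))
        (Rpower ((INR k - 1) / b) (/ INR k)).
Proof.
case: k hk heq => [|[|K]] // _ heq.
have -> : INR K.+2 - 1 = INR K.+1 by rewrite (S_INR K.+1); lra.
have N_pos j : (0 < N j)%N by apply: leq_trans (hN2 j).
have N_posR j : 0 < INR (N j) by apply/lt_0_INR/ltP.
have K_pos : 0 < INR K.+1 by apply/lt_0_INR/ltP.
have close j : 0 < q0 j /\
    Rabs (INR (N j) * q0 j ^ K.+2 - INR K.+1 / b) <=
    (2 * INR K.+1 * INR K.+1 / b + INR K.+1 * INR K.+1 / (b * b)) / b / INR (N j).
  have [q0_pos bounds] :=
    sym_eq_openness_bounds hc (fraction_card_bounds hb (N_pos j) (hpat j)) (heq j).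
  split => //; rewrite hpat in bounds.
  exact: scaled_openness_error K_pos (proj1 hb) (N_posR j) (pow_lt _ _ q0_pos) bounds.
have := Rpower_Un_cv (/ INR K.+2) (Rdiv_lt_0_compat _ _ K_pos (proj1 hb))
  (Un_cv_dist_le_inv hNinf N_pos (fun j => proj2 (close j))).
apply: Un_cv_ext => j.
by rewrite mul_Rpower_inv //; case: (close j).
Qed.
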